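(* Fix integers $p,q\ge 0$ and integers $L_1,\dots,L_q\ge 1$. Fix an observation $(x,y)$ with $x=(x_1,\dots,x_p)\in\mathbb{R}^p$ and $y=(y_1,\dots,y_q)$, $y_j\in\{1,\dots,L_j\}$. Consider the parameters $\Theta=\{\beta_{ss},\beta_{st},\alpha_s,\rho_{sj},\phi_{rj}\}$, where $\beta_{st}=\beta_{ts}\in\mathbb{R}$ for $s,t\in\{1,\dots,p\}$, $\alpha_s\in\mathbb{R}$, $\rho_{sj}=(\rho_{sj}(1),\dots,\rho_{sj}(L_j))\in\mathbb{R}^{L_j}$ for $s\le p$, $j\le q$, and $\phi_{rj}\in\mathbb{R}^{L_r\times L_j}$ for $r,j\le q$ with $\phi_{rj}(a,b)=\phi_{jr}(b,a)$ (so symmetric pairs are one and the same parameter). Define the negative log pseudolikelihood $$\tilde\ell(\Theta\mid x,y)=-\sum_{s=1}^p\log p(x_s\mid x_{\setminus s},y;\Theta)-\sum_{r=1}^q\log p(y_r\mid x,y_{\setminus r};\Theta),$$ where $$p(x_s\mid x_{\setminus s},y;\Theta)=\frac{\sqrt{\beta_{ss}}}{\sqrt{2\pi}}\exp\!\left(-\frac{\beta_{ss}}{2}\left(\frac{\alpha_s+\sum_{j=1}^q\rho_{sj}(y_j)-\sum_{t\ne s}\beta_{st}x_t}{\beta_{ss}}-x_s\right)^2\right)$$ and $$p(y_r\mid x,y_{\setminus r};\Theta)=\frac{\exp\!\left(\sum_{s=1}^p\rho_{sr}(y_r)x_s+\phi_{rr}(y_r,y_r)+\sum_{j\ne r}\phi_{rj}(y_r,y_j)\right)}{\sum_{l=1}^{L_r}\exp\!\left(\sum_{s=1}^p\rho_{sr}(l)x_s+\phi_{rr}(l,l)+\sum_{j\ne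 r}\phi_{rj}(l,y_j)\right)}.$$ Then $\tilde\ell(\Theta\mid x,y)$ is jointly convex in all the parameters $\{\beta_{ss},\beta_{st},\alpha_s,\phi_{rj},\rho_{sj}\}$ over the region where $\beta_{ss}>0$ for all $s=1,\dots,p$.
   Context: This is the pseudolikelihood of a pairwise mixed graphical model on $p$ continuous variables $x_s$ and $q$ discrete variables $y_j$ (taking $L_j$ states), with joint density proportional to $\exp\big(\sum_{s,t}-\tfrac12\beta_{st}x_sx_t+\sum_s\alpha_sx_s+\sum_{s,j}\rho_{sj}(y_j)x_s+\sum_{r,j}\phi_{rj}(y_r,y_j)\big)$; the displayed conditionals are the Gaussian (for $x_s$) and multinomial-logistic (for $y_r$) conditional distributions of this model. Here $x_{\setminus s}$ denotes all continuous coordinates except $x_s$ and $y_{\setminus r}$ all discrete coordinates except $y_r$. *)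

From mathcomp Require Import all_boot all_order all_algebra.
From mathcomp Require Import all_classical all_reals all_analysis.
Set Implicit Arguments. Unset Strict Implicit. Unset Printing Implicit Defensive.
Import Order.TTheory GRing.Theory Num.Theory.
Local Open Scope ring_scope.

(* Continuous variables are indexed by 'I_p, discrete ones by 'I_q;
   the discrete variable j takes states in 'I_(L j) (0-based, i.e. state
   l+1 of the paper is the ordinal l). *)
Record mgm_param (R : realType) (p q : nat) (L : 'I_q -> nat) := MgmParam {
  beta  : 'I_p -> 'I_p -> R;
  alpha : 'I_p -> R;
  rho   : 'I_p -> forall j : 'I_q, 'I_(L j) -> R;
  phi   : forall r j : 'I_q, 'I_(L r) -> 'I_(L j) -> R }.
Arguments rho {R p q L} m s j a.
Arguments phi {R p q L} m r j a b.

Definition mgm_admissible (R : realType) p q (L : 'I_q -> nat)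
  (th : mgm_param R p L) : Prop :=
  (forall s t : 'I_p, beta th s t = beta th t s) /\
  (forall (r j : 'I_q) (a : 'I_(L r)) (b : 'I_(L j)),
      phi th r j a b = phi th j r b a) /\
  (forall s : 'I_p, 0 < beta th s s).

Definition mgm_comb (R : realType) p q (L : 'I_q -> nat) (t : R)
  (th1 th2 : mgm_param R p L) : mgm_param R p L :=
  MgmParam
    (fun s u => t * beta th1 s u + (1 - t) * beta th2 s u)
    (fun s => t * alpha th1 s + (1 - t) * alpha th2 s)
    (fun s j a => t * rho th1 s j a + (1 - t) * rho th2 s j a)
    (fun r j a b => t * phi th1 r j a b + (1 - t) * phi th2 r j a b).

Definition cond_x (R : realType) p q (L : 'I_q -> nat) (th : mgm_param R p L)
  (x : 'I_p -> R) (y : forall j : 'I_q, 'I_(L j)) (s : 'I_p) : R :=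
  let bss := beta th s s in
  let m := (alpha th s + \sum_(j < q) rho th s j (y j)
            - \sum_(u < p | u != s) beta th s u * x u) / bss in
  Num.sqrt bss / Num.sqrt (2 * pi) * expR (- (bss / 2) * (m - x s) ^+ 2).

Definition cond_y (R : realType) p q (L : 'I_q -> nat) (th : mgm_param R p L)
  (x : 'I_p -> R) (y : forall j : 'I_q, 'I_(L j)) (r : 'I_q) : R :=
  let E := fun l : 'I_(L r) =>
    \sum_(s < p) rho th s r l * x s + phi th r r l l
    + \sum_(j < q | j != r) phi th r j l (y j) in
  expR (E (y r)) / \sum_(l < L r) expR (E l).

Definition neg_log_pl (R : realType) p q (L : 'I_q -> nat)
  (th : mgm_param R p L) (x : 'I_p -> R) (y : forall j : 'I_q, 'I_(L j)) : R :=
  - \sum_(s < p) ln (cond_x th x y s) - \sum_(r < q) ln (cond_y th x y r).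

From mathcomp Require Import all_boot all_order all_algebra.
From mathcomp Require Import all_classical all_reals all_analysis.
From mathcomp Require Import ring lra.
Set Implicit Arguments. Unset Strict Implicit. Unset Printing Implicit Defensive.
Import Order.TTheory GRing.Theory Num.Theory.
Local Open Scope ring_scope.

(* Up to the constant [ln (2 pi)], [-2 ln p(x_s | ...)] equals
   [- ln beta_ss + r^2 / beta_ss], where the residual
   [r = alpha_s + sum_j rho_sj(y_j) - sum_t beta_st x_t] is linear in the
   parameters; [- ln] is convex and [r^2 / b] is the perspective of the
   square, hence jointly convex in [(r, b)] for [b > 0]. Likewise
   [- ln p(y_r | ...)] is log-sum-exp of linear functions of the parameters
   minus a linear function. *)

Section ConvexInequalities.
Variable R : realFieldType.
Implicit Types (t a b : R).

Lemma sumr_comb (I : finType) (P : pred I) t (f g : I -> R) :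
  \sum_(i | P i) (t * f i + (1 - t) * g i)
    = t * \sum_(i | P i) f i + (1 - t) * \sum_(i | P i) g i.
Proof. by rewrite big_split -!mulr_sumr. Qed.

Lemma ler_sum_comb (I : finType) t (h f g : I -> R) :
  (forall i, h i <= t * f i + (1 - t) * g i) ->
  \sum_i h i <= t * \sum_i f i + (1 - t) * \sum_i g i.
Proof. by move=> hfg; rewrite -sumr_comb; apply: ler_sum => i _. Qed.

Lemma comb_gt0 t a b : 0 <= t -> t <= 1 -> 0 < a -> 0 < b ->
  0 < t * a + (1 - t) * b.
Proof.
move=> t0 t1 a0 b0; have [->|t_neq0] := eqVneq t 0.
  by rewrite mul0r add0r subr0 mul1r.
apply: ltr_pwDl; last by rewrite mulr_ge0 // ?subr_ge0 // ltW.
by rewrite mulr_gt0 // lt_neqAle eq_sym t_neq0.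
Qed.

Lemma perspective_sqr_convex t u v a b : 0 <= t -> t <= 1 -> 0 < a -> 0 < b ->
  (t * u + (1 - t) * v) ^+ 2 / (t * a + (1 - t) * b)
    <= t * (u ^+ 2 / a) + (1 - t) * (v ^+ 2 / b).
Proof.
move=> t0 t1 a0 b0; have ab0 := comb_gt0 t0 t1 a0 b0.
rewrite ler_pdivrMr // -subr_ge0.
have -> : (t * (u ^+ 2 / a) + (1 - t) * (v ^+ 2 / b)) * (t * a + (1 - t) * b)
    - (t * u + (1 - t) * v) ^+ 2 = t * (1 - t) * (u * b - v * a) ^+ 2 / (a * b).
  by field; rewrite ?gt_eqF.
apply: divr_ge0; last by rewrite ltW ?mulr_gt0.
by rewrite mulr_ge0 ?sqr_ge0 // mulr_ge0 // subr_ge0.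
Qed.

End ConvexInequalities.

Section ExpLn.
Variable R : realType.
Implicit Types (t a b : R).

Lemma expR_comb_le t a b : 0 <= t -> t <= 1 ->
  expR (t * a + (1 - t) * b) <= t * expR a + (1 - t) * expR b.
Proof. by move=> t0 t1; have := convex_expR (Itv01 t0 t1) a b; rewrite !convRE. Qed.

Lemma ln_comb_ge t a b : 0 <= t -> t <= 1 -> 0 < a -> 0 < b ->
  t * ln a + (1 - t) * ln b <= ln (t * a + (1 - t) * b).
Proof.
by move=> t0 t1 a0 b0; have := concave_ln (Itv01 t0 t1) a0 b0; rewrite !convRE.
Qed.

Lemma ln_sqrtr a : 0 < a -> ln (Num.sqrt a) = ln a / 2.
Proof.
move=> a0; have -> : ln a = ln (Num.sqrt a ^+ 2) by rewrite sqr_sqrtr ?ltW.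
by rewrite lnXn ?sqrtr_gt0 // mulr2n; field.
Qed.

Lemma sum_expR_gt0 n (a : 'I_n -> R) : (0 < n)%N -> 0 < \sum_(l < n) expR (a l).
Proof.
case: n a => [//|n] a _; rewrite big_ord_recl.
by apply: ltr_pwDl; rewrite ?expR_gt0 ?sumr_ge0 // => l _; rewrite expR_ge0.
Qed.

Definition logsumexp n (a : 'I_n -> R) : R := ln (\sum_(l < n) expR (a l)).

(* With [c] the claimed bound, [expR (t a_l + (1 - t) b_l - c)] is a convex
   combination of the two softmax weights [expR a_l / A] and [expR b_l / B],
   each of which sums to [1]. *)
Lemma logsumexp_convex n (a b : 'I_n -> R) t : (0 < n)%N -> 0 <= t -> t <= 1 ->
  logsumexp (fun l => t * a l + (1 - t) * b l)
    <= t * logsumexp a + (1 - t) * logsumexp b.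
Proof.
move=> n0 t0 t1; rewrite /logsumexp.
set A := \sum_(l < n) expR (a l); set B := \sum_(l < n) expR (b l).
have A0 : 0 < A by exact: sum_expR_gt0.
have B0 : 0 < B by exact: sum_expR_gt0.
set c := t * ln A + (1 - t) * ln B.
rewrite -[leRHS]expRK ler_ln ?posrE ?expR_gt0 ?sum_expR_gt0 //.
have softmax_bound l : expR (t * a l + (1 - t) * b l)
    <= expR c * (t * (expR (a l) / A) + (1 - t) * (expR (b l) / B)).
  have -> : t * a l + (1 - t) * b l
      = c + (t * (a l - ln A) + (1 - t) * (b l - ln B)) by rewrite /c; ring.
  rewrite expRD ler_wpM2l ?expR_ge0 // -[A]lnK ?posrE // -[B]lnK ?posrE //.
  by rewrite -!expRN -!expRD !lnK ?posrE //; exact: expR_comb_le.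
apply: (le_trans (ler_sum _ (fun l _ => softmax_bound l))).
rewrite -mulr_sumr sumr_comb -!mulr_suml -/A -/B !divff ?gt_eqF //.
by rewrite !mulr1 addrC subrK mulr1.
Qed.

End ExpLn.

Section PseudoLikelihood.
Variables (R : realType) (p q : nat) (L : 'I_q -> nat).
Variables (x : 'I_p -> R) (y : forall j : 'I_q, 'I_(L j)).
Implicit Types (th : mgm_param R p L) (t : R).

Definition x_residual th (s : 'I_p) : R :=
  alpha th s + \sum_(j < q) rho th s j (y j) - \sum_(u < p) beta th s u * x u.

Definition y_energy th (r : 'I_q) (l : 'I_(L r)) : R :=
  \sum_(s < p) rho th s r l * x s + phi th r r l l
  + \sum_(j < q | j != r) phi th r j l (y j).
Arguments y_energy th r l : clear implicits.

Lemma x_residual_comb t th1 th2 s :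
  x_residual (mgm_comb t th1 th2) s = t * x_residual th1 s + (1 - t) * x_residual th2 s.
Proof.
rewrite /x_residual /=; under [\sum_(u < p) _]eq_bigr => u _ do rewrite mulrDl -!mulrA.
by rewrite !sumr_comb; ring.
Qed.

Lemma y_energy_comb t th1 th2 r l :
  y_energy (mgm_comb t th1 th2) r l = t * y_energy th1 r l + (1 - t) * y_energy th2 r l.
Proof.
rewrite /y_energy /=; under eq_bigr => s _ do rewrite mulrDl -!mulrA.
by rewrite !sumr_comb; ring.
Qed.

Lemma neg_ln_cond_x th s : 0 < beta th s s ->
  - ln (cond_x th x y s) =
  (ln (2 * pi) - ln (beta th s s) + x_residual th s ^+ 2 / beta th s s) / 2.
Proof.
move=> b0; have pi2_gt0 : 0 < 2 * pi :> R by rewrite mulr_gt0 ?pi_gt0.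
rewrite /cond_x [ln (_ * expR _)]lnM ?posrE ?divr_gt0 ?sqrtr_gt0 ?expR_gt0 //.
rewrite ln_div ?posrE ?sqrtr_gt0 // expRK !ln_sqrtr //.
rewrite /x_residual [\sum_(u < p) _](bigD1 s) //=.
by field; rewrite gt_eqF.
Qed.

Lemma neg_ln_cond_y th r : (0 < L r)%N ->
  - ln (cond_y th x y r) = logsumexp (y_energy th r) - y_energy th r (y r).
Proof.
by move=> L0; rewrite /cond_y ln_div ?posrE ?expR_gt0 ?sum_expR_gt0 // expRK opprB.
Qed.

Lemma neg_ln_cond_x_convex t th1 th2 s : 0 <= t -> t <= 1 ->
  0 < beta th1 s s -> 0 < beta th2 s s ->
  - ln (cond_x (mgm_comb t th1 th2) x y s)
    <= t * - ln (cond_x th1 x y s) + (1 - t) * - ln (cond_x th2 x y s).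
Proof.
move=> t0 t1 b1 b2; have b_comb := comb_gt0 t0 t1 b1 b2.
rewrite !neg_ln_cond_x // x_residual_comb /=.
have := ln_comb_ge t0 t1 b1 b2.
have := perspective_sqr_convex (x_residual th1 s) (x_residual th2 s) t0 t1 b1 b2.
lra.
Qed.

Lemma neg_ln_cond_y_convex t th1 th2 r : 0 <= t -> t <= 1 -> (0 < L r)%N ->
  - ln (cond_y (mgm_comb t th1 th2) x y r)
    <= t * - ln (cond_y th1 x y r) + (1 - t) * - ln (cond_y th2 x y r).
Proof.
move=> t0 t1 L0; rewrite !neg_ln_cond_y // y_energy_comb.
under [y_energy _ r]funext => l do rewrite y_energy_comb.
have := logsumexp_convex (y_energy th1 r) (y_energy th2 r) L0 t0 t1.
lra.
Qed.

End PseudoLikelihood.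

Theorem proposition1 (R : realType) (p q : nat) (L : 'I_q -> nat)
  (HL : forall j : 'I_q, (0 < L j)%N)
  (x : 'I_p -> R) (y : forall j : 'I_q, 'I_(L j))
  (th1 th2 : mgm_param R p L) (t : R) :
  mgm_admissible th1 -> mgm_admissible th2 -> 0 <= t -> t <= 1 ->
  neg_log_pl (mgm_comb t th1 th2) x y
    <= t * neg_log_pl th1 x y + (1 - t) * neg_log_pl th2 x y.
Proof.
move=> [_ [_ b1]] [_ [_ b2]] t0 t1.
rewrite /neg_log_pl -!sumrN !mulrDr addrACA.
apply: lerD; apply: ler_sum_comb => i.
- exact: neg_ln_cond_x_convex.
- exact: neg_ln_cond_y_convex.
Qed.
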